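(* Let $\Gamma=(\mathcal{V},\mathcal{H})$ be a bipartite oriented hypergraph. Then $\Gamma$ is isospectral to its underlying hypergraph $\Gamma'$, i.e. the normalized Laplacian $L$ of $\Gamma$ and the normalized Laplacian $L'$ of $\Gamma'$ have the same eigenvalues with the same multiplicities. In particular, $\Gamma$ is isospectral to every other bipartite oriented hypergraph that has the same underlying hypergraph as $\Gamma$.
   Context: An oriented hypergraph is a pair $\Gamma=(\mathcal{V},\mathcal{H})$ where $\mathcal{V}=\{v_1,\ldots,v_N\}$ is a finite set of vertices and each hyperedge $h\in\mathcal{H}$ is a pair $(h_{in},h_{out})$ of disjoint nonempty subsets of $\mathcal{V}$ (inputs and outputs). Standing assumption: $\Gamma$ has no isolated vertices. Two vertices are co-oriented in $h$ if they lie in the same one of $h_{in},h_{out}$, and anti-oriented in $h$ if they lie in different ones. The degree $\deg(v)$ is the number of hyperedges containing $v$ (i.e. with $v\in h_{in}\cup h_{out}$); $D$ is the diagonal matrix of degrees. The adjacency matrix $A$ has $A_{ii}=0$ and, for $i\neq j$, $A_{ij}=\#\{h: v_i,v_j \text{ anti-oriented in } h\}-\#\{h: v_i,v_j\text{ co-oriented in } h\}$. The normalized Laplacian is $L=\mathrm{Id}-D^{-1}A$. The underlying hypergraph $\Gamma'$ has the same vertices and hyperedges $(h_{in}\cup h_{out},\emptyset)$ for $h\in\mathcal{H}$; hence its degrees coincide with those of $\Gamma$, its adjacency matrix is $A'_{ii}=0$, $A'_{ij}=-\#\{h\in\mathcal{H}: v_i,v_j\in h_{in}\cup h_{out}\}$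 for $i\ne j$, and $L'=\mathrm{Id}-D^{-1}A'$. $\Gamma$ is bipartite if $\mathcal{V}=\mathcal{V}_1\sqcup\mathcal{V}_2$ such that every hyperedge either has all its inputs in $\mathcal{V}_1$ and all its outputs in $\mathcal{V}_2$, or all its inputs in $\mathcal{V}_2$ and all its outputs in $\mathcal{V}_1$. *)

From mathcomp Require Import all_boot all_order all_algebra.
Set Implicit Arguments. Unset Strict Implicit. Unset Printing Implicit Defensive.
Import GRing.Theory Num.Theory.
Local Open Scope ring_scope.

(* An oriented hypergraph on vertices 'I_N with hyperedges indexed by 'I_M:
   hyperedge h is the pair (hin h, hout h). *)

Definition is_oriented_hypergraph (N M : nat) (hin hout : 'I_M -> {set 'I_N}) :=
  forall h : 'I_M, [disjoint hin h & hout h] /\ hin h != set0 /\ hout h != set0.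

Definition hdeg (N M : nat) (hin hout : 'I_M -> {set 'I_N}) (v : 'I_N) : nat :=
  #|[set h : 'I_M | (v \in hin h) || (v \in hout h)]|.

Definition no_isolated_vertices (N M : nat) (hin hout : 'I_M -> {set 'I_N}) :=
  forall v : 'I_N, (0 < hdeg hin hout v)%N.

Definition anti_count (N M : nat) (hin hout : 'I_M -> {set 'I_N}) (i j : 'I_N) : nat :=
  #|[set h : 'I_M | ((i \in hin h) && (j \in hout h)) || ((i \in hout h) && (j \in hin h))]|.

Definition co_count (N M : nat) (hin hout : 'I_M -> {set 'I_N}) (i j : 'I_N) : nat :=
  #|[set h : 'I_M | ((i \in hin h) && (j \in hin h)) || ((i \in hout h) && (j \in hout h))]|.

Definition degmx (R : fieldType) (N M : nat) (hin hout : 'I_M -> {set 'I_N}) : 'M[R]_N :=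
  diag_mx (\row_i ((hdeg hin hout i)%:R : R)).

Definition adjmx (R : fieldType) (N M : nat) (hin hout : 'I_M -> {set 'I_N}) : 'M[R]_N :=
  \matrix_(i, j) (if i == j then 0
                  else ((anti_count hin hout i j)%:R - (co_count hin hout i j)%:R : R)).

Definition nlap (R : fieldType) (N M : nat) (hin hout : 'I_M -> {set 'I_N}) : 'M[R]_N :=
  1%:M - invmx (degmx R hin hout) *m adjmx R hin hout.

Definition und_in (N M : nat) (hin hout : 'I_M -> {set 'I_N}) : 'I_M -> {set 'I_N} :=
  fun h => hin h :|: hout h.
Definition und_out (N M : nat) : 'I_M -> {set 'I_N} := fun _ => set0.

Definition bipartite (N M : nat) (hin hout : 'I_M -> {set 'I_N}) :=
  exists V1 : {set 'I_N},
    forall h : 'I_M,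
      (hin h \subset V1) && (hout h \subset ~: V1)
      || (hin h \subset ~: V1) && (hout h \subset V1).

Definition same_underlying (N M M2 : nat) (hin hout : 'I_M -> {set 'I_N})
    (hin2 hout2 : 'I_M2 -> {set 'I_N}) :=
  exists sigma : 'I_M -> 'I_M2, bijective sigma /\
    forall h, hin h :|: hout h = hin2 (sigma h) :|: hout2 (sigma h).

(* Let V1 be one side of the bipartition and S the diagonal matrix with entry
   1 on V1 and -1 off V1.  Two vertices of a common hyperedge are co-oriented
   exactly when they lie on the same side, so A' = S A S while D' = D; since S
   is diagonal and S S = 1 this gives L' = S L S = S L S^-1, and similar
   matrices have the same characteristic polynomial.  The Laplacian of the
   underlying hypergraph only depends on the hyperedges up to reindexing,
   which yields the second claim. *)

From mathcomp Require Import all_boot all_order all_algebra.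
Set Implicit Arguments. Unset Strict Implicit. Unset Printing Implicit Defensive.
Import GRing.Theory.
Local Open Scope ring_scope.

Lemma char_poly_conj (R : comNzRingType) n (V W A : 'M[R]_n) :
  V *m W = 1%:M -> char_poly (V *m A *m W) = char_poly A.
Proof.
move=> VW; pose C := @map_mx _ _ (@polyC R) n n.
have CVW : C V *m C W = 1%:M by rewrite -map_mxM VW map_mx1.
have conjE : char_poly_mx (V *m A *m W) = C V *m char_poly_mx A *m C W.
  rewrite /char_poly_mx !map_mxM mulmxBr mulmxBl; congr (_ - _).
  by rewrite scalar_mxC -mulmxA CVW mulmx1.
by rewrite /char_poly conjE !det_mulmx mulrAC -det_mulmx CVW det1 mul1r.
Qed.

Lemma comm_mx_invmx (R : comUnitRingType) n (A B : 'M[R]_n) :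
  comm_mx A B -> comm_mx A (invmx B).
Proof.
move=> AB; have [Bu|/invmx_out-> //] := boolP (B \in unitmx).
rewrite /comm_mx -[LHS]mul1mx -(mulVmx Bu) -mulmxA (mulmxA B) -AB.
by rewrite -!mulmxA mulmxV // mulmx1.
Qed.

Section UnderlyingHypergraph.

Variables (N M : nat) (hin hout : 'I_M -> {set 'I_N}).

Lemma hdeg_und : hdeg (und_in hin hout) (@und_out N M) =1 hdeg hin hout.
Proof. by move=> v; apply: eq_card => h; rewrite !inE orbF. Qed.

Lemma anti_count_und i j : anti_count (und_in hin hout) (@und_out N M) i j = 0%N.
Proof. by apply: eq_card0 => h; rewrite !inE !andbF. Qed.

End UnderlyingHypergraph.

Section BipartiteSwitching.

Variables (R : fieldType) (N M : nat) (hin hout : 'I_M -> {set 'I_N}) (V1 : {set 'I_N}).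

Definition side_sign (i : 'I_N) : R := if i \in V1 then 1 else -1.

Definition side_signmx : 'M[R]_N := diag_mx (\row_i side_sign i).

Lemma side_sign_sqr i : side_sign i * side_sign i = 1.
Proof. by rewrite /side_sign; case: ifP => _; rewrite ?mulrNN mulr1. Qed.

Lemma side_signmxK : side_signmx *m side_signmx = 1%:M.
Proof.
by apply/matrixP => i j; rewrite mulmx_diag !mxE side_sign_sqr; case: eqP.
Qed.

Lemma side_signmx_conjE (A : 'M[R]_N) i j :
  (side_signmx *m A *m side_signmx) i j = side_sign i * A i j * side_sign j.
Proof. by rewrite mul_mx_diag mul_diag_mx !mxE. Qed.

(* Disjointness of inputs and outputs is not assumed: it follows from this. *)
Hypothesis bipartite_V1 : forall h : 'I_M,
  (hin h \subset V1) && (hout h \subset ~: V1)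
  || (hin h \subset ~: V1) && (hout h \subset V1).

Lemma bipartite_side h : exists b : bool, forall x,
  ((x \in hin h) ==> ((x \in V1) == b)) && ((x \in hout h) ==> ((x \in V1) != b)).
Proof.
have [/andP[/subsetP inV1 /subsetP outV2] | /andP[/subsetP inV2 /subsetP outV1]] :=
  orP (bipartite_V1 h); [exists true | exists false] => x;
  apply/andP; split; apply/implyP.
- by move/inV1 ->.
- by move/outV2; rewrite inE => /negbTE ->.
- by move/inV2; rewrite inE => /negbTE ->.
- by move/outV1 ->.
Qed.

Lemma bipartite_anti_oriented h i j :
  ((i \in hin h) && (j \in hout h)) || ((i \in hout h) && (j \in hin h))
  = [&& i \in und_in hin hout h, j \in und_in hin hout h & (i \in V1) != (j \in V1)].
Proof.
have [b sideE] := bipartite_side h; move: (sideE i) (sideE j) => {sideE}; rewrite !inE.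
by case: (i \in hin h) (i \in hout h) (j \in hin h) (j \in hout h) (i \in V1) (j \in V1)
  => [] [] [] [] [] []; case: b.
Qed.

Lemma bipartite_co_oriented h i j :
  ((i \in hin h) && (j \in hin h)) || ((i \in hout h) && (j \in hout h))
  = [&& i \in und_in hin hout h, j \in und_in hin hout h & (i \in V1) == (j \in V1)].
Proof.
have [b sideE] := bipartite_side h; move: (sideE i) (sideE j) => {sideE}; rewrite !inE.
by case: (i \in hin h) (i \in hout h) (j \in hin h) (j \in hout h) (i \in V1) (j \in V1)
  => [] [] [] [] [] []; case: b.
Qed.

Lemma anti_count_bipartite i j : anti_count hin hout i j =
  if (i \in V1) == (j \in V1) then 0%N else co_count (und_in hin hout) (@und_out N M) i j.
Proof.
rewrite /anti_count /co_count; have [sides|sides] := eqVneq (i \in V1) (j \in V1).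
  by apply: eq_card0 => h; rewrite !inE bipartite_anti_oriented sides eqxx !andbF.
apply: eq_card => h.
by rewrite !inE bipartite_anti_oriented /und_in sides !andbF andbT orbF !inE.
Qed.

Lemma co_count_bipartite i j : co_count hin hout i j =
  if (i \in V1) == (j \in V1) then co_count (und_in hin hout) (@und_out N M) i j else 0%N.
Proof.
rewrite /co_count; have [sides|sides] := eqVneq (i \in V1) (j \in V1).
  apply: eq_card => h.
  by rewrite !inE bipartite_co_oriented /und_in sides eqxx !andbF andbT orbF !inE.
by apply: eq_card0 => h; rewrite !inE bipartite_co_oriented (negbTE sides) !andbF.
Qed.

Lemma adjmx_und_bipartite :
  adjmx R (und_in hin hout) (@und_out N M) = side_signmx *m adjmx R hin hout *m side_signmx.
Proof.
apply/matrixP => i j; rewrite side_signmx_conjE !mxE.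
case: eqP => _; first by rewrite mulr0 mul0r.
rewrite anti_count_und anti_count_bipartite co_count_bipartite /side_sign.
by case: (i \in V1); case: (j \in V1);
  rewrite /= ?mulr1 ?mul1r ?mulrN1 ?mulN1r ?sub0r ?subr0 ?opprK.
Qed.

Lemma nlap_und_bipartite :
  nlap R (und_in hin hout) (@und_out N M) = side_signmx *m nlap R hin hout *m side_signmx.
Proof.
have degE : degmx R (und_in hin hout) (@und_out N M) = degmx R hin hout.
  by apply/matrixP => i j; rewrite !mxE hdeg_und.
have commS : comm_mx side_signmx (invmx (degmx R hin hout)).
  exact/comm_mx_invmx/diag_mx_comm.
by rewrite /nlap degE adjmx_und_bipartite mulmxBr mulmxBl mulmx1 side_signmxK !mulmxA commS.
Qed.

End BipartiteSwitching.

Lemma char_poly_nlap_und_bipartite (R : fieldType) (N M : nat)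
    (hin hout : 'I_M -> {set 'I_N}) :
  bipartite hin hout ->
  char_poly (nlap R hin hout) = char_poly (nlap R (und_in hin hout) (@und_out N M)).
Proof.
by case=> V1 bipV1; rewrite (nlap_und_bipartite R bipV1) char_poly_conj ?side_signmxK.
Qed.

Lemma card_set_bij (I J : finType) (sigma : I -> J) (P : pred J) :
  bijective sigma -> #|[set h | P (sigma h)]| = #|[set h | P h]|.
Proof.
move=> bij_sigma; rewrite -(on_card_preimset (onW_bij _ bij_sigma)).
by apply: eq_card => h; rewrite !inE.
Qed.

Section SameUnderlying.

Variables (N M M2 : nat) (hin hout : 'I_M -> {set 'I_N}).
Variables (hin2 hout2 : 'I_M2 -> {set 'I_N}).
Hypothesis same_und : same_underlying hin hout hin2 hout2.

Lemma card_und_reindex (F : pred {set 'I_N}) :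
  #|[set h | F (und_in hin hout h)]| = #|[set h | F (und_in hin2 hout2 h)]|.
Proof.
have [sigma [bij_sigma undE]] := same_und.
by rewrite -(card_set_bij _ bij_sigma); apply: eq_card => h; rewrite !inE /und_in undE.
Qed.

Lemma nlap_und_same_underlying (R : fieldType) :
  nlap R (und_in hin hout) (@und_out N M) = nlap R (und_in hin2 hout2) (@und_out N M2).
Proof.
rewrite /nlap /degmx /adjmx; congr (_ - invmx (diag_mx _) *m _);
  apply/matrixP => i j; rewrite !mxE.
  by rewrite /hdeg /und_out (card_und_reindex (fun E => (j \in E) || (j \in set0))).
rewrite !anti_count_und /co_count /und_out.
by rewrite (card_und_reindex (fun E => (i \in E) && (j \in E) || (i \in set0) && (j \in set0))).
Qed.

End SameUnderlying.

Theorem mainTheorem1 (R : realFieldType) (N M : nat) (hin hout : 'I_M -> {set 'I_N}) :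
  is_oriented_hypergraph hin hout ->
  no_isolated_vertices hin hout ->
  bipartite hin hout ->
  char_poly (nlap R hin hout) = char_poly (nlap R (und_in hin hout) (@und_out N M))
  /\ (forall (M2 : nat) (hin2 hout2 : 'I_M2 -> {set 'I_N}),
        is_oriented_hypergraph hin2 hout2 ->
        bipartite hin2 hout2 ->
        same_underlying hin hout hin2 hout2 ->
        char_poly (nlap R hin hout) = char_poly (nlap R hin2 hout2)).
Proof.
(* Without [no_isolated_vertices], [invmx D] is the junk value [D], which
   still commutes with the sign matrix. *)
move=> _ _ bip; split; first exact: char_poly_nlap_und_bipartite.
move=> M2 hin2 hout2 _ bip2 same_und.
rewrite (char_poly_nlap_und_bipartite R bip) (char_poly_nlap_und_bipartite R bip2).
by rewrite (nlap_und_same_underlying same_und).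
Qed.
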